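(* Let $G$ be a monomer graph with boundary atoms $v_0,v_{n-1}$, $G^p$ its polymer graph and $G^*$ its induced star-linking graph, all with the same initial node features, and fix an integer $d_{thres}\ge 1$. Assume that the graph distance in $G$ between $v_0$ and $v_{n-1}$ is larger than $2d_{thres}-1$. If a network consists of localized graph attention layers (with threshold $d_{thres}$), nodewise transformations, and concludes with a mean pooling, then its output on $G^p$ is identical to its output on $G^*$.
   Context: A monomer graph is $G=(V,E,\mathbf{X})$ with atoms $V=\{v_0,\dots,v_{n-1}\}$, bonds $E$, features $\mathbf{x}_i\in\mathbb{R}^d$ of $v_i$, and boundary atoms $v_0,v_{n-1}$. The polymer graph $G^p$ has nodes $v^p_i$, $i\in\mathbb{Z}$, with $v^p_i$ carrying the features of $v_{i\bmod n}$; its edges are $(v^p_{kn+a},v^p_{kn+b})$ for every $k\in\mathbb{Z}$ and every bond $(v_a,v_b)\in E$, plus $(v^p_{kn-1},v^p_{kn})$ for every $k\in\mathbb{Z}$. The induced star-linking graph $G^*$ has node set $V$, edge set $E\cup\{(v_0,v_{n-1})\}$ and the same features. Localized graph attention (LGA) with threshold $d_{thres}$: with learnable $\mathbf{W}^Q,\mathbf{W}^K,\mathbf{W}^V\in\mathbb{R}^{d\times d}$, set $\mathbf{q}_j=\mathbf{W}^Q\mathbf{x}_j$, $\mathbf{k}_i=\mathbf{W}^K\mathbf{x}_i$, $\mathbf{v}_i=\mathbf{W}^V\mathbf{x}_i$; for nodes $i,j$ with graph distance $d_{ij}$ and a shortest path $\mathbf{p}_{ij}$, the attention logit is $\mathbf{k}_i^T\mathbf{q}_j/\sqrt{d}+f_{dist}(d_{ij})+f_{path}(\mathbf{p}_{ij})$,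 where $f_{dist}, f_{path}$ are fixed scalar-valued functions ($f_{path}$ depending only on the node/edge attributes along the path); the weights $\hat A_{ij}$ are the softmax of these logits over the nodes $i$ with $d_{ij}<d_{thres}$ (and $\hat A_{ij}=0$ if $d_{ij}\ge d_{thres}$); the new feature of $j$ is $\mathbf{y}_j=\sum_i \hat A_{ij}\mathbf{v}_i$. A nodewise transformation applies a fixed function to each node feature independently (e.g. residual connections, layer normalization, feed-forward networks). Layers are applied identically on both graphs. Node features on $G^p$ remain $n$-periodic, and mean pooling on $G^p$ is the average over one period $v^p_0,\dots,v^p_{n-1}$; on $G^*$ it is the average over all nodes. *)

From HB Require Import structures.
From mathcomp Require Import all_boot all_order all_algebra.
From mathcomp Require Import all_classical all_reals all_analysis.
Set Implicit Arguments. Unset Strict Implicit. Unset Printing Implicit Defensive.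
Import Order.TTheory GRing.Theory Num.Theory.
Local Open Scope classical_set_scope.
Local Open Scope ring_scope.

Fixpoint chainP {V : Type} (adj : V -> V -> Prop) (u : V) (q : seq V) : Prop :=
  match q with
  | [::] => True
  | w :: q' => adj u w /\ chainP adj w q'
  end.

Definition is_walk {V : Type} (adj : V -> V -> Prop) (i j : V) (p : seq V) : Prop :=
  match p with
  | [::] => False
  | u :: q => u = i /\ last u q = j /\ chainP adj u q
  end.

Definition walk_length {V : Type} (p : seq V) : nat := (size p).-1.

Definition dist_lt {V : Type} (adj : V -> V -> Prop) (t : nat) (i j : V) : Prop :=
  exists p, is_walk adj i j p /\ (walk_length p < t)%N.

(* m < d(i, j) (with d(i,j) = +infinity when i, j are disconnected) *)
Definition dist_gt {V : Type} (adj : V -> V -> Prop) (m : nat) (i j : V) : Prop :=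
  forall p, is_walk adj i j p -> (m < walk_length p)%N.

Definition is_gdist {V : Type} (adj : V -> V -> Prop) (i j : V) (d : nat) : Prop :=
  (exists p, is_walk adj i j p /\ walk_length p = d) /\
  (forall p, is_walk adj i j p -> (d <= walk_length p)%N).

(* the graph distance (only meaningful for connected pairs) *)
Definition gdist {V : Type} (adj : V -> V -> Prop) (i j : V) : nat :=
  xget 0%N [set d | is_gdist adj i j d].

Definition is_shortest_path {V : Type} (adj : V -> V -> Prop) (i j : V) (p : seq V) :=
  is_walk adj i j p /\ walk_length p = gdist adj i j.

Definition path_edges {V EA : Type} (ea : V -> V -> EA) (p : seq V) : seq EA :=
  [seq ea e.1 e.2 | e <- zip p (behead p)].

Section Network.
Variables (R : realType) (d : nat) (NA EA : Type).

(* One LGA layer on a graph with node type V: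
   adj: adjacency, na/ea: node/edge attributes (used by f_path),
   sel i j: the chosen shortest path p_ij (from i to j), t = d_thres. *)
Definition lga {V : choiceType} (adj : V -> V -> Prop) (na : V -> NA)
  (ea : V -> V -> EA) (sel : V -> V -> seq V) (t : nat)
  (WQ WK WV : 'M[R]_d) (fdist : nat -> R) (fpath : seq NA -> seq EA -> R)
  (x : V -> 'cV[R]_d) : V -> 'cV[R]_d :=
  fun j =>
    let logit i := ((WK *m x i)^T *m (WQ *m x j)) 0 0 / Num.sqrt (d%:R)
                   + fdist (gdist adj i j)
                   + fpath (map na (sel i j)) (path_edges ea (sel i j)) in
    let Nj := [set i | dist_lt adj t i j] in
    (\sum_(i \in Nj) expR (logit i))^-1 *:
      \sum_(i \in Nj) (expR (logit i) *: (WV *m x i)).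

Inductive layer : Type :=
  | LGA_layer of 'M[R]_d & 'M[R]_d & 'M[R]_d & (nat -> R) & (seq NA -> seq EA -> R)
  | Nodewise_layer of ('cV[R]_d -> 'cV[R]_d).

Definition apply_layer {V : choiceType} (adj : V -> V -> Prop) (na : V -> NA)
  (ea : V -> V -> EA) (sel : V -> V -> seq V) (t : nat) (l : layer)
  (x : V -> 'cV[R]_d) : V -> 'cV[R]_d :=
  match l with
  | LGA_layer WQ WK WV fd fp => lga adj na ea sel t WQ WK WV fd fp x
  | Nodewise_layer f => fun v => f (x v)
  end.

Definition run_layers {V : choiceType} (adj : V -> V -> Prop) (na : V -> NA)
  (ea : V -> V -> EA) (sel : V -> V -> seq V) (t : nat) (ls : seq layer)
  (x : V -> 'cV[R]_d) : V -> 'cV[R]_d :=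
  foldl (fun y l => apply_layer adj na ea sel t l y) x ls.

End Network.

(* The monomer has n.+1 atoms 'I_n.+1; v_0 = ord0, v_{last} = ord_max. *)

Definition mono_adj (n : nat) (E : rel 'I_n.+1) (a b : 'I_n.+1) : Prop :=
  E a b \/ E b a.

Definition star_adj (n : nat) (E : rel 'I_n.+1) (a b : 'I_n.+1) : Prop :=
  mono_adj E a b \/ (a = ord0 /\ b = ord_max) \/ (a = ord_max /\ b = ord0).

(* polymer graph G^p on nodes v^p_u, u : int *)
Definition poly_adj (n : nat) (E : rel 'I_n.+1) (u v : int) : Prop :=
  (exists (k : int) (a b : 'I_n.+1),
      mono_adj E a b /\ u = k * (n.+1)%:Z + (a : nat)%:Z /\ v = k * (n.+1)%:Z + (b : nat)%:Z)
  \/ (exists k : int,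
      (u = k * (n.+1)%:Z - 1 /\ v = k * (n.+1)%:Z) \/
      (v = k * (n.+1)%:Z - 1 /\ u = k * (n.+1)%:Z)).

Definition atom_of (n : nat) (u : int) : 'I_n.+1 := inord `|(u %% (n.+1)%:Z)%Z|%N.

Definition poly_ea (n : nat) {EA : Type} (eatt : 'I_n.+1 -> 'I_n.+1 -> EA) (link : EA)
  (u v : int) : EA :=
  if ((v == u + 1) && ((n.+1)%:Z %| v)%Z) || ((u == v + 1) && ((n.+1)%:Z %| u)%Z)
  then link else eatt (atom_of n u) (atom_of n v).

Definition star_ea (n : nat) {EA : Type} (eatt : 'I_n.+1 -> 'I_n.+1 -> EA) (link : EA)
  (a b : 'I_n.+1) : EA :=
  if ((a == ord0) && (b == ord_max)) || ((a == ord_max) && (b == ord0))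
  then link else eatt a b.

Definition mean_pool_poly (R : realType) (d n : nat) (h : int -> 'cV[R]_d) : 'cV[R]_d :=
  (n.+1)%:R^-1 *: \sum_(a < n.+1) h (a : nat)%:Z.

Definition mean_pool_star (R : realType) (d n : nat) (h : 'I_n.+1 -> 'cV[R]_d) : 'cV[R]_d :=
  (n.+1)%:R^-1 *: \sum_(a < n.+1) h a.

From HB Require Import structures.
From mathcomp Require Import all_boot all_order all_algebra.
From mathcomp Require Import all_classical all_reals all_analysis.
From mathcomp Require Import zify.
Set Implicit Arguments. Unset Strict Implicit. Unset Printing Implicit Defensive.
Import Order.TTheory GRing.Theory Num.Theory.
Local Open Scope classical_set_scope.
Local Open Scope ring_scope.

(** The projection u |-> u mod n.+1 from G^p onto G^* is a covering map: it
    sends edges to edges, and every edge of G^* at the image of u lifts to an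
    edge of G^p at u.  Hence every walk of G^* lifts, with the same length, to
    a walk of G^p with a prescribed endpoint.  The distance hypothesis makes
    the projection injective on every ball of radius < t = d_thres: the height
    h(k(n+1) + a) = 2tk + min(d(v_0, a), 2t) is 1-Lipschitz on G^p, while two
    distinct lifts of one atom differ in height by a nonzero multiple of 2t.
    So the projection maps every attention neighbourhood of G^p bijectively
    onto the corresponding one of G^*, preserving distances, path attributes
    and features; every layer thus commutes with the projection, and averaging
    over one period of G^p is averaging over G^*. *)

Lemma last_rev_belast (T : Type) (u : T) q : last (last u q) (rev (belast u q)) = u.
Proof. by case: q => [|x q] //=; rewrite rev_cons last_rcons. Qed.

Section Walks.
Variables (V : Type) (adj : V -> V -> Prop).

Lemma chainP_rcons u q w :
  chainP adj u (rcons q w) <-> chainP adj u q /\ adj (last u q) w.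
Proof.
elim: q u => [|x q IH] u /=; first by tauto.
by have := IH x; tauto.
Qed.

Lemma walk_length_rev (p : seq V) : walk_length (rev p) = walk_length p.
Proof. by rewrite /walk_length size_rev. Qed.

Lemma dist_gt_step m x a b :
  adj b a -> dist_gt adj m.+1 x a -> dist_gt adj m x b.
Proof.
move=> ba gt_a [|u q] // [xu [ub c]].
have /gt_a : is_walk adj x a (rcons (u :: q) a).
  by rewrite /= last_rcons; split=> //; split=> //; apply/chainP_rcons; rewrite ub.
by rewrite /walk_length size_rcons.
Qed.

Lemma normr_sub_le_walk_length (h : V -> int) i j p :
  (forall x y, adj x y -> `|h x - h y| <= 1) ->
  is_walk adj i j p -> `|h i - h j| <= (walk_length p)%:Z.
Proof.
move=> h_lip; case: p => [|u q] //= [-> [<-]]; rewrite /walk_length /=.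
elim: q i => [|w q IH] i /=; first by rewrite subrr.
move=> [/h_lip iw /IH wq]; have := ler_distD (h w) (h i) (h (last w q)); lia.
Qed.

Hypothesis adj_sym : forall x y, adj x y -> adj y x.

Lemma chainP_rev u q : chainP adj u q -> chainP adj (last u q) (rev (belast u q)).
Proof.
elim: q u => [|w q IH] u //= [uw c].
rewrite rev_cons; apply/chainP_rcons; split; first exact: IH.
by rewrite last_rev_belast; apply: adj_sym.
Qed.

Lemma is_walk_rev i j p : is_walk adj i j p -> is_walk adj j i (rev p).
Proof.
case: p => [|u q] //= [-> [<- c]].
by rewrite lastI rev_rcons /= last_rev_belast; split=> //; split=> //; apply: chainP_rev.
Qed.

End Walks.

Section Maps.
Variables (V W : Type) (adj : V -> V -> Prop) (adj' : W -> W -> Prop) (f : V -> W).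

Lemma walk_length_map (p : seq V) : walk_length (map f p) = walk_length p.
Proof. by rewrite /walk_length size_map. Qed.

Lemma path_edges_map (EA : Type) (ea : V -> V -> EA) (ea' : W -> W -> EA) i j p :
  (forall x y, adj x y -> ea x y = ea' (f x) (f y)) ->
  is_walk adj i j p -> path_edges ea p = path_edges ea' (map f p).
Proof.
move=> ea_f; case: p => [|u q] //= [_ [_]].
by elim: q u => [|w q IH] u //= [/ea_f uw /IH]; rewrite /path_edges /= uw => ->.
Qed.

Hypothesis f_hom : forall x y, adj x y -> adj' (f x) (f y).

Lemma chainP_map u q : chainP adj u q -> chainP adj' (f u) (map f q).
Proof. by elim: q u => [|w q IH] u //= [/f_hom uw /IH]. Qed.

Lemma is_walk_map i j p : is_walk adj i j p -> is_walk adj' (f i) (f j) (map f p).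
Proof.
by case: p => [|u q] //= [-> [<- c]]; rewrite last_map; split=> //; split=> //; apply: chainP_map.
Qed.

Lemma dist_lt_map t i j : dist_lt adj t i j -> dist_lt adj' t (f i) (f j).
Proof.
by move=> [p [w lt]]; exists (map f p); rewrite walk_length_map; split=> //; apply: is_walk_map.
Qed.

End Maps.

Section Covering.
Variables (V W : Type) (adj : V -> V -> Prop) (adj' : W -> W -> Prop) (f : V -> W).
Hypotheses (adj_sym : forall x y, adj x y -> adj y x)
           (adj'_sym : forall x y, adj' x y -> adj' y x).
Hypothesis f_hom : forall x y, adj x y -> adj' (f x) (f y).
Hypothesis f_lift : forall u b, adj' (f u) b -> exists2 v, adj u v & f v = b.

Lemma chainP_lift u q : chainP adj' (f u) q -> exists2 p, map f p = q & chainP adj u p.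
Proof.
elim: q u => [|b q IH] u /=; first by exists [::].
by move=> [/f_lift [v uv <-] /IH [p <- vp]]; exists (v :: p).
Qed.

Lemma is_walk_lift_to a j q : is_walk adj' a (f j) q ->
  exists i p, [/\ f i = a, is_walk adj i j p & walk_length p = walk_length q].
Proof.
move=> /(is_walk_rev adj'_sym); rewrite -(walk_length_rev q).
case: (rev q) => [|x q'] //= [-> [qa c]].
have [p ep jp] := chainP_lift c.
exists (last j p), (rev (j :: p)); split.
- by rewrite -qa -ep last_map.
- by apply: is_walk_rev.
- by rewrite walk_length_rev /walk_length /= -ep size_map.
Qed.

Variable t : nat.

Lemma ball_cover j :
  [set a | dist_lt adj' t a (f j)] = f @` [set i | dist_lt adj t i j].
Proof.
apply/seteqP; split=> [a [q [w lt]]|_ [i ij <-]]; last exact: (dist_lt_map f_hom ij).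
have [i [p [<- wp lp]]] := is_walk_lift_to w.
by exists i => //; exists p; rewrite lp.
Qed.

Hypothesis f_inj_ball : forall i i' j,
  dist_lt adj t i j -> dist_lt adj t i' j -> f i = f i' -> i = i'.

Lemma gdist_cover i j : dist_lt adj t i j -> gdist adj i j = gdist adj' (f i) (f j).
Proof.
move=> ij; have [p0 [w0 lt0]] := ij.
have lift_short q : is_walk adj' (f i) (f j) q -> (walk_length q < t)%N ->
    exists2 p, is_walk adj i j p & walk_length p = walk_length q.
  move=> wq ltq; have [i' [p [ii' wp lp]]] := is_walk_lift_to wq.
  have i'j : dist_lt adj t i' j by exists p; rewrite lp.
  by rewrite -(f_inj_ball i'j ij ii'); exists p.
rewrite /gdist; congr (xget _ _); apply/funext => D; apply/propext.
split=> -[[p [w <-]] minp].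
- split=> [|q wq]; first by exists (map f p); split;
    [exact: (is_walk_map f_hom w) | exact: walk_length_map].
  have [ltq|] := ltnP (walk_length q) t; last by have := minp _ w0; lia.
  by have [p' wp' <-] := lift_short q wq ltq; apply: minp.
- have ltp : (walk_length p < t)%N.
    by have := minp _ (is_walk_map f_hom w0); rewrite walk_length_map; lia.
  split=> [|p' wp']; first by have [p' wp' <-] := lift_short p w ltp; exists p'.
  by rewrite -(walk_length_map f p'); apply: minp; exact: (is_walk_map f_hom wp').
Qed.

End Covering.

Section Network.
Variables (R : realType) (d : nat) (NA EA : Type) (V W : choiceType).
Variables (adj : V -> V -> Prop) (adj' : W -> W -> Prop) (f : V -> W) (t : nat).
Variables (na : V -> NA) (na' : W -> NA) (ea : V -> V -> EA) (ea' : W -> W -> EA).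
Variables (sel : V -> V -> seq V) (sel' : W -> W -> seq W).
Hypothesis ball_image : forall j,
  [set a | dist_lt adj' t a (f j)] = f @` [set i | dist_lt adj t i j].
Hypothesis f_inj_ball : forall i i' j,
  dist_lt adj t i j -> dist_lt adj t i' j -> f i = f i' -> i = i'.
Hypothesis gdist_f : forall i j,
  dist_lt adj t i j -> gdist adj i j = gdist adj' (f i) (f j).
Hypothesis sel_na : forall i j,
  dist_lt adj t i j -> map na (sel i j) = map na' (sel' (f i) (f j)).
Hypothesis sel_ea : forall i j,
  dist_lt adj t i j -> path_edges ea (sel i j) = path_edges ea' (sel' (f i) (f j)).

Lemma lga_comp WQ WK WV fd fp (x : W -> 'cV[R]_d) :
  lga adj na ea sel t WQ WK WV fd fp (x \o f) =1
  lga adj' na' ea' sel' t WQ WK WV fd fp x \o f.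
Proof.
move=> j; have inj : set_inj [set i | dist_lt adj t i j] f.
  by move=> i i' /set_mem ij /set_mem i'j; exact: (f_inj_ball ij i'j).
rewrite /lga /= ball_image !fsbig_image //.
by congr (_^-1 *: _); apply: eq_fsbigr => i /set_mem ij;
  rewrite gdist_f // sel_na // sel_ea.
Qed.

Lemma run_layers_comp (ls : seq (layer R d NA EA)) (x : W -> 'cV[R]_d) :
  run_layers adj na ea sel t ls (x \o f) =1 run_layers adj' na' ea' sel' t ls x \o f.
Proof.
elim: ls x => [|l ls IH] x //=.
have -> : apply_layer adj na ea sel t l (x \o f) =
          apply_layer adj' na' ea' sel' t l x \o f.
  by case: l => [WQ WK WV fd fp|g] //=; apply/funext/lga_comp.
exact: IH.
Qed.

End Network.

Section Polymer.
Variables (n : nat) (E : rel 'I_n.+1).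
Local Notation N := (n.+1)%:Z.

Lemma divz_block (k : int) (a : 'I_n.+1) : ((k * N + a%:Z) %/ N)%Z = k.
Proof. by rewrite divzMDl // divz_small ?addr0 // ltz_nat ltn_ord. Qed.

Lemma atom_of_block (k : int) (a : 'I_n.+1) : atom_of n (k * N + a%:Z) = a.
Proof.
by apply: val_inj; rewrite /atom_of modzMDl modz_small ?ltz_nat ?ltn_ord //= inordK.
Qed.

Lemma atom_of_nat (a : 'I_n.+1) : atom_of n a%:Z = a.
Proof. by have := atom_of_block 0 a; rewrite mul0r add0r. Qed.

Lemma atom_of_block_start (k : int) : atom_of n (k * N) = ord0.
Proof. by have := atom_of_block k ord0; rewrite addr0. Qed.

Lemma link_decomp (k : int) : k * N - 1 = (k - 1) * N + (@ord_max n)%:Z.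
Proof. by rewrite /=; lia. Qed.

Lemma atom_of_link_end (k : int) : atom_of n (k * N - 1) = ord_max.
Proof. by rewrite link_decomp atom_of_block. Qed.

Lemma block_decomp (u : int) : u = (u %/ N)%Z * N + (atom_of n u)%:Z.
Proof.
rewrite {1}(divz_eq u N) /atom_of inordK; first by rewrite gez0_abs ?modz_ge0.
by rewrite -ltz_nat gez0_abs ?modz_ge0 ?ltz_pmod.
Qed.

Lemma dvdz_atom_of (u : int) : (N %| u)%Z -> atom_of n u = ord0.
Proof. by move=> /dvdz_mod0P Nu; apply: val_inj; rewrite /atom_of Nu /= inordK. Qed.

Lemma mono_adj_sym a b : mono_adj E a b -> mono_adj E b a.
Proof. by rewrite /mono_adj; tauto. Qed.

Lemma star_adj_sym a b : star_adj E a b -> star_adj E b a.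
Proof. by rewrite /star_adj => -[/mono_adj_sym|[]]; tauto. Qed.

Lemma poly_adj_sym u v : poly_adj E u v -> poly_adj E v u.
Proof.
case=> [[k [a [b [/mono_adj_sym ba [-> ->]]]]]|[k uv]]; first by left; exists k, b, a.
by right; exists k; tauto.
Qed.

Lemma star_adj_atom_of u v : poly_adj E u v -> star_adj E (atom_of n u) (atom_of n v).
Proof.
case=> [[k [a [b [ab [-> ->]]]]]|[k [[-> ->]|[-> ->]]]].
- by left; rewrite !atom_of_block.
- by right; right; rewrite atom_of_link_end atom_of_block_start.
- by right; left; rewrite atom_of_link_end atom_of_block_start.
Qed.

Lemma poly_adj_lift u b :
  star_adj E (atom_of n u) b -> exists2 v, poly_adj E u v & atom_of n v = b.
Proof.
move: (block_decomp u); set k := (u %/ N)%Z; set a := atom_of n u => du.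
case=> [ab|[[a0 ->]|[am ->]]].
- by exists (k * N + b%:Z); [left; exists k, a, b | exact: atom_of_block].
- exists (k * N - 1); last exact: atom_of_link_end.
  by right; exists k; right; rewrite du a0 addr0.
- exists ((k + 1) * N); last exact: atom_of_block_start.
  by right; exists (k + 1); left; rewrite du am /=; lia.
Qed.

Lemma poly_ea_atom_of (EA : Type) (eatt : 'I_n.+1 -> 'I_n.+1 -> EA) (link : EA) u v :
  ~ mono_adj E ord0 ord_max -> poly_adj E u v ->
  poly_ea eatt link u v = star_ea eatt link (atom_of n u) (atom_of n v).
Proof.
move=> no_bond; rewrite /poly_ea /star_ea.
case=> [[k [a [b [ab [-> ->]]]]]|[k [[-> ->]|[-> ->]]]]; last first.
- rewrite atom_of_link_end atom_of_block_start subrK eqxx dvdz_mull ?dvdzz ?orbT //=.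
  by rewrite !eqxx.
- rewrite atom_of_link_end atom_of_block_start subrK eqxx dvdz_mull ?dvdzz //=.
  by rewrite !eqxx ?orbT.
rewrite !atom_of_block; case: ifP => [|_].
  case/orP=> /andP[/eqP e /dvdz_atom_of]; rewrite atom_of_block => /(congr1 val) /= z;
    move: e; rewrite z; lia.
case: ifP => // /orP[]/andP[/eqP a0 /eqP bm]; subst a b; first by case: no_bond.
by case: no_bond; apply: mono_adj_sym.
Qed.

Variable t : nat.
Hypotheses (t_gt0 : (0 < t)%N) (far : dist_gt (mono_adj E) (2 * t - 1) ord0 ord_max).

Lemma no_bond_ends : ~ mono_adj E ord0 ord_max.
Proof.
move=> bond; have /far : is_walk (mono_adj E) ord0 ord_max [:: ord0; ord_max] by [].
by rewrite /walk_length /=; lia.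
Qed.

(* min (d(v_0, b), 2 t), with d = +oo for atoms unreachable from v_0 *)
Definition depth (b : 'I_n.+1) : nat :=
  \sum_(m < 2 * t) `[< dist_gt (mono_adj E) m ord0 b >].

Lemma depth_ord0 : depth ord0 = 0%N.
Proof.
have w : is_walk (mono_adj E) ord0 ord0 [:: ord0] by [].
by rewrite /depth big1 // => m _; rewrite asboolF // => /(_ _ w); rewrite ltn0.
Qed.

Lemma depth_ord_max : depth ord_max = (2 * t)%N.
Proof.
rewrite /depth (eq_bigr (fun=> 1%N)) ?sum_nat_const ?card_ord ?muln1 // => m _.
by rewrite asboolT // => p /far; have := ltn_ord m; lia.
Qed.

Lemma depth_lipschitz a b : mono_adj E a b -> (depth a <= (depth b).+1)%N.
Proof.
move=> ab; rewrite /depth.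
have -> : (2 * t = (2 * t).-1.+1)%N by lia.
rewrite big_ord_recl big_ord_recr /=.
set A := (\sum_(m < _) _)%N; set B := (\sum_(m < _) _)%N.
suff : (A <= B)%N by have := leq_b1 `[< dist_gt (mono_adj E) 0 ord0 a >]; lia.
apply: leq_sum => m _; case: asboolP => // gt.
by rewrite asboolT //; exact: (dist_gt_step (mono_adj_sym ab) gt).
Qed.

Definition height (u : int) : int := (u %/ N)%Z * (2 * t)%:Z + (depth (atom_of n u))%:Z.

Lemma height_block (k : int) (a : 'I_n.+1) :
  height (k * N + a%:Z) = k * (2 * t)%:Z + (depth a)%:Z.
Proof. by rewrite /height divz_block atom_of_block. Qed.

Lemma height_lipschitz u v : poly_adj E u v -> `|height u - height v| <= 1.
Proof.
case=> [[k [a [b [ab [-> ->]]]]]|[k uv]].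
  rewrite !height_block; have := depth_lipschitz ab.
  by have := depth_lipschitz (mono_adj_sym ab); lia.
have start : height (k * N) = k * (2 * t)%:Z.
  by have := height_block k ord0; rewrite addr0 depth_ord0 addr0.
have link_end : height (k * N - 1) = k * (2 * t)%:Z.
  by rewrite link_decomp height_block depth_ord_max; lia.
by case: uv => -[-> ->]; rewrite start link_end subrr.
Qed.

Lemma poly_ball_inj i i' j :
  dist_lt (poly_adj E) t i j -> dist_lt (poly_adj E) t i' j ->
  atom_of n i = atom_of n i' -> i = i'.
Proof.
move=> [p [w lt]] [p' [w' lt']] same.
have := normr_sub_le_walk_length height_lipschitz w.
have := normr_sub_le_walk_length height_lipschitz w'.
rewrite [height i]/height [height i']/height same => hi' hi.
suff eq_blk : (i %/ N)%Z = (i' %/ N)%Z.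
  by rewrite (block_decomp i) (block_decomp i') eq_blk same.
move: hi hi' lt lt'; nia.
Qed.

Lemma run_layers_poly_star (R : realType) (d : nat) (NA EA : Type)
    (natt : 'I_n.+1 -> NA) (eatt : 'I_n.+1 -> 'I_n.+1 -> EA) (link : EA)
    (selp : int -> int -> seq int) (sels : 'I_n.+1 -> 'I_n.+1 -> seq 'I_n.+1)
    (ls : seq (layer R d NA EA)) (X : 'I_n.+1 -> 'cV[R]_d) :
  (forall i j, dist_lt (poly_adj E) t i j ->
     is_shortest_path (poly_adj E) i j (selp i j)) ->
  (forall i j, dist_lt (poly_adj E) t i j ->
     map (atom_of n) (selp i j) = sels (atom_of n i) (atom_of n j)) ->
  run_layers (poly_adj E) (natt \o atom_of n) (poly_ea eatt link) selp t ls
    (X \o atom_of n) =1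
  run_layers (star_adj E) natt (star_ea eatt link) sels t ls X \o atom_of n.
Proof.
move=> sel_path sel_atom.
apply: run_layers_comp => [j|i i' j|i j|i j ij|i j ij].
- exact: (ball_cover poly_adj_sym star_adj_sym star_adj_atom_of poly_adj_lift).
- exact: poly_ball_inj.
- exact: (gdist_cover poly_adj_sym star_adj_sym star_adj_atom_of poly_adj_lift
            poly_ball_inj).
- by rewrite map_comp sel_atom.
- have [w _] := sel_path i j ij; rewrite -sel_atom //.
  by apply: path_edges_map w => x y; apply: poly_ea_atom_of no_bond_ends.
Qed.

End Polymer.

Unset Implicit Arguments.
Theorem theorem2 (R : realType) (d n : nat) (NA EA : Type)
  (E : rel 'I_n.+1) (X : 'I_n.+1 -> 'cV[R]_d)
  (natt : 'I_n.+1 -> NA) (eatt : 'I_n.+1 -> 'I_n.+1 -> EA) (link : EA)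
  (t : nat) (ls : seq (layer R d NA EA))
  (selp : int -> int -> seq int) (sels : 'I_n.+1 -> 'I_n.+1 -> seq 'I_n.+1) :
  (1 <= t)%N ->
  dist_gt (mono_adj E) (2 * t - 1) ord0 ord_max ->
  (forall i j : int, dist_lt (poly_adj E) t i j ->
     is_shortest_path (poly_adj E) i j (selp i j)) ->
  (forall a b : 'I_n.+1, dist_lt (star_adj E) t a b ->
     is_shortest_path (star_adj E) a b (sels a b)) ->
  (forall i j : int, dist_lt (poly_adj E) t i j ->
     map (atom_of n) (selp i j) = sels (atom_of n i) (atom_of n j)) ->
  mean_pool_poly n
    (run_layers (poly_adj E) (fun u => natt (atom_of n u)) (poly_ea eatt link) selp t ls
       (fun u => X (atom_of n u)))
  = mean_pool_star
    (run_layers (star_adj E) natt (star_ea eatt link) sels t ls X).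
Proof.
(* sels is only ever evaluated on projections of the paths selp *)
move=> t_gt0 far sel_path _ sel_atom.
rewrite /mean_pool_poly /mean_pool_star; congr (_ *: _); apply: eq_bigr => a _.
rewrite (run_layers_poly_star t_gt0 far natt eatt link ls X sel_path sel_atom) /=.
by rewrite atom_of_nat.
Qed.
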